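(* If $h=1/p$, then for any weight matrix $V\in\mathbb{R}^{2p\times(d+1)}$, $\lVert\nabla^2_VL\rVert_{op}\le 5pL(V)$.
   Context: Huberized ReLU with bandwidth $h$: $\phi(z)=0$ for $z<0$, $z^2/(2h)$ for $z\in[0,h]$, $z-h/2$ for $z>h$; $\phi'(z)=0$ for $z<0$, $z/h$ on $[0,h]$, $1$ for $z>h$; weak second derivative $\gamma(z)=1/h$ for $z\in[0,h]$ and $0$ otherwise. Data $(x_1,y_1),\ldots,(x_n,y_n)$ with $x_s\in\mathbb{R}^{d+1}$, $\lVert x_s\rVert=1$, $y_s\in\{-1,1\}$. For $V$ with rows $v_1,\ldots,v_{2p}$ and fixed $u_1=\cdots=u_p=1$, $u_{p+1}=\cdots=u_{2p}=-1$: $f_V(x)=\sum_{i=1}^{2p}u_i\phi(v_i\cdot x)$, $L(V)=\frac1n\sum_s\ln(1+\exp(-y_sf_V(x_s)))$. The weak Hessian $\nabla^2_VL$ is the block matrix with blocks, for $i\ne j$, $\frac{u_iu_j}{n}\sum_s\frac{\phi'(v_i\cdot x_s)\phi'(v_j\cdot x_s)e^{y_sf_V(x_s)}}{(1+e^{y_sf_V(x_s)})^2}x_sx_s^\top$ and, for $i=j$, $\frac1n\sum_s\Big[\frac{-u_i\gamma(v_i\cdot x_s)y_s}{1+e^{y_sf_V(x_s)}}+\frac{\phi'(v_i\cdot x_s)^2e^{y_sf_V(x_s)}}{(1+e^{y_sf_V(x_s)})^2}\Big]x_sx_s^\top$. $\lVert\cdot\rVert_{op}$ is the operator norm. *)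

From HB Require Import structures.
From mathcomp Require Import all_boot all_order all_algebra.
From mathcomp Require Import all_classical all_reals all_analysis.
Set Implicit Arguments. Unset Strict Implicit. Unset Printing Implicit Defensive.
Import Order.TTheory GRing.Theory Num.Theory.
Local Open Scope ring_scope.

Section Defs.
Variable R : realType.

Definition hrelu (h z : R) : R :=
  if z < 0 then 0 else if z <= h then z ^+ 2 / (2 * h) else z - h / 2.
Definition hrelu' (h z : R) : R :=
  if z < 0 then 0 else if z <= h then z / h else 1.
Definition hgamma (h z : R) : R :=
  if (0 <= z) && (z <= h) then 1 / h else 0.

(* fixed output weights: u_i = 1 for i < p, -1 otherwise (i : 'I_(2p)) *)
Definition uw (p : nat) (i : 'I_(2 * p)) : R := if (i < p)%N then 1 else -1.

Definition dotv (p d : nat) (V : 'M[R]_(2 * p, d.+1)) (i : 'I_(2 * p))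
  (x : 'rV[R]_(d.+1)) : R := \sum_(a < d.+1) V i a * x 0 a.

Definition fV (h : R) (p d : nat) (V : 'M[R]_(2 * p, d.+1)) (x : 'rV[R]_(d.+1)) : R :=
  \sum_(i < 2 * p) uw i * hrelu h (dotv V i x).

Definition lossL (h : R) (n p d : nat) (x : 'I_n -> 'rV[R]_(d.+1)) (y : 'I_n -> R)
  (V : 'M[R]_(2 * p, d.+1)) : R :=
  n%:R^-1 * \sum_(s < n) ln (1 + expR (- (y s * fV h V (x s)))).

Definition hess_block (h : R) (n p d : nat) (x : 'I_n -> 'rV[R]_(d.+1))
  (y : 'I_n -> R) (V : 'M[R]_(2 * p, d.+1)) (i j : 'I_(2 * p)) : 'M[R]_(d.+1) :=
  let E s := expR (y s * fV h V (x s)) in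
  if i != j then
    (uw i * uw j / n%:R) *:
      \sum_(s < n) ((hrelu' h (dotv V i (x s)) * hrelu' h (dotv V j (x s))
                      * E s / (1 + E s) ^+ 2) *: ((x s)^T *m x s))
  else
    n%:R^-1 *:
      \sum_(s < n) ((- uw i * hgamma h (dotv V i (x s)) * y s / (1 + E s)
                     + hrelu' h (dotv V i (x s)) ^+ 2 * E s / (1 + E s) ^+ 2)
                     *: ((x s)^T *m x s)).

Definition block_apply (p d : nat) (H : 'I_(2 * p) -> 'I_(2 * p) -> 'M[R]_(d.+1))
  (W : 'M[R]_(2 * p, d.+1)) : 'M[R]_(2 * p, d.+1) :=
  \matrix_(i, a) \sum_(j < 2 * p) \sum_(b < d.+1) H i j a b * W j b.

Definition euclid (m k : nat) (W : 'M[R]_(m, k)) : R :=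
  Num.sqrt (\sum_(i < m) \sum_(a < k) W i a ^+ 2).

Definition op_norm (p d : nat) (H : 'I_(2 * p) -> 'I_(2 * p) -> 'M[R]_(d.+1)) : R :=
  sup [set r : R | exists W : 'M[R]_(2 * p, d.+1),
                     euclid W = 1 /\ r = euclid (block_apply H W)].

End Defs.

From HB Require Import structures.
From mathcomp Require Import all_boot all_order all_algebra.
From mathcomp Require Import all_classical all_reals all_analysis.
From mathcomp Require Import ring lra.

(* For a sample s with margin m_s = y_s f_V(x_s), the (i, j) block of the Hessian is
   n^-1 C_s(i, j) x_s^T x_s summed over s, where
   C_s = l''(m_s) g_s^T g_s + diag(delta_s) is a rank-one term built from the row
   g_s(i) = u_i phi'(v_i . x_s) plus a diagonal term coming from the weak second
   derivative gamma <= 1/h, and l(m) = ln (1 + e^-m) is the logistic loss.  Such a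
   Kronecker sum maps W to n^-1 sum_s C_s W x_s^T x_s.  Using the Frobenius norm,
   |x_s| = 1, |g_s|^2 <= 2p, |delta_s(i)| <= |l'(m_s)| / h and l'' <= |l'| <= l, each
   sample contributes at most (2p + 1/h) l(m_s); for h = 1/p this is 3p L(V). *)
Set Implicit Arguments. Unset Strict Implicit. Unset Printing Implicit Defensive.
Import Order.TTheory GRing.Theory Num.Theory.
Local Open Scope ring_scope.

Section FrobeniusNorm.
Variable R : realType.

Lemma cauchy_schwarz (T : finType) (f g : T -> R) :
  (\sum_t f t * g t) ^+ 2 <= (\sum_t f t ^+ 2) * (\sum_t g t ^+ 2).
Proof.
have amgm i j :
    f i * g i * (f j * g j) <= (f i ^+ 2 * g j ^+ 2 + f j ^+ 2 * g i ^+ 2) / 2.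
  by rewrite ler_pdivlMr // -subr_ge0; have := sqr_ge0 (f i * g j - f j * g i); nra.
rewrite expr2 mulr_suml; under eq_bigr do rewrite mulr_sumr.
apply: le_trans (_ : _ <= \sum_i \sum_j (f i ^+ 2 * g j ^+ 2 + f j ^+ 2 * g i ^+ 2) / 2) _.
  by apply: ler_sum => i _; apply: ler_sum => j _; exact: amgm.
under eq_bigr do rewrite -mulr_suml big_split /=.
rewrite -mulr_suml big_split /= [X in _ + X]exchange_big /= -mulr2n.
rewrite -[X in X / 2]mulr_natr mulfK //.
by rewrite mulr_suml; apply: ler_sum => i _; rewrite mulr_sumr.
Qed.

Lemma euclid_ge0 m k (A : 'M[R]_(m, k)) : 0 <= euclid A.
Proof. exact: sqrtr_ge0. Qed.

Lemma sqr_euclid m k (A : 'M[R]_(m, k)) : euclid A ^+ 2 = \sum_i \sum_a A i a ^+ 2.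
Proof.
by rewrite sqr_sqrtr // sumr_ge0 // => i _; rewrite sumr_ge0 // => a _; exact: sqr_ge0.
Qed.

Lemma euclid_le m k (A : 'M[R]_(m, k)) c :
  0 <= c -> \sum_i \sum_a A i a ^+ 2 <= c ^+ 2 -> euclid A <= c.
Proof. by move=> c0 H; rewrite -(ger0_norm c0) -sqrtr_sqr ler_sqrt // sqr_ge0. Qed.

Lemma ler_euclid_mulmx m k l (A : 'M[R]_(m, k)) (B : 'M[R]_(k, l)) :
  euclid (A *m B) <= euclid A * euclid B.
Proof.
apply: euclid_le; first by rewrite mulr_ge0 ?euclid_ge0.
rewrite exprMn !sqr_euclid [X in _ <= _ * X]exchange_big mulr_suml.
apply: ler_sum => i _; rewrite mulr_sumr; apply: ler_sum => c _; rewrite mxE.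
exact: cauchy_schwarz.
Qed.

Lemma ler_euclidD m k (A B : 'M[R]_(m, k)) : euclid (A + B) <= euclid A + euclid B.
Proof.
apply: euclid_le; first by rewrite addr_ge0 ?euclid_ge0.
have cs : (\sum_i \sum_a A i a * B i a) ^+ 2 <= (euclid A * euclid B) ^+ 2.
  by rewrite exprMn !sqr_euclid !pair_bigA; exact: cauchy_schwarz.
under eq_bigr do under eq_bigr do rewrite mxE sqrrD.
rewrite sqrrD !sqr_euclid; under eq_bigr do rewrite !big_split /=.
rewrite !big_split /= -mulr2n lerD2r lerD2l lerMn2r /=.
have := mulr_ge0 (euclid_ge0 A) (euclid_ge0 B); nra.
Qed.

Lemma ler_euclid_sum m k (I : Type) (r : seq I) (F : I -> 'M[R]_(m, k)) :
  euclid (\sum_(s <- r) F s) <= \sum_(s <- r) euclid (F s).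
Proof.
elim: r => [|s r IH]; rewrite ?big_nil ?big_cons.
  apply: euclid_le => //; rewrite expr0n big1 // => i _.
  by rewrite big1 // => a _; rewrite mxE expr0n.
by apply: le_trans (ler_euclidD _ _) _; rewrite lerD2l.
Qed.

Lemma euclidZ m k c (A : 'M[R]_(m, k)) : euclid (c *: A) = `|c| * euclid A.
Proof.
rewrite -sqrtr_sqr -sqrtrM ?sqr_ge0 // /euclid mulr_sumr.
congr Num.sqrt; apply: eq_bigr => i _; rewrite mulr_sumr.
by apply: eq_bigr => a _; rewrite mxE exprMn.
Qed.

Lemma euclid_trmx m k (A : 'M[R]_(m, k)) : euclid A^T = euclid A.
Proof.
rewrite /euclid exchange_big; congr Num.sqrt.
by apply: eq_bigr => a _; apply: eq_bigr => i _; rewrite mxE.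
Qed.

Lemma ler_euclid_diag_mulmx m k (u : 'rV[R]_m) (A : 'M[R]_(m, k)) c :
  0 <= c -> (forall i, `|u 0 i| <= c) -> euclid (diag_mx u *m A) <= c * euclid A.
Proof.
move=> c0 uc; apply: euclid_le; first by rewrite mulr_ge0 ?euclid_ge0.
rewrite exprMn sqr_euclid mulr_sumr; apply: ler_sum => i _.
rewrite mulr_sumr; apply: ler_sum => a _; rewrite mul_diag_mx mxE exprMn.
by rewrite ler_wpM2r ?sqr_ge0 // -real_normK ?num_real // lerXn2r ?nnegrE.
Qed.

End FrobeniusNorm.

Lemma block_apply_kron (R : realType) p d (I : finType)
    (C : I -> 'M[R]_(2 * p)) (M : I -> 'M[R]_d.+1) (W : 'M[R]_(2 * p, d.+1)) :
  block_apply (fun i j => \sum_s C s i j *: M s) W = \sum_s C s *m W *m (M s)^T.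
Proof.
apply/matrixP => i a; rewrite !mxE summxE.
under eq_bigr do under eq_bigr do rewrite summxE mulr_suml.
under eq_bigr do rewrite exchange_big.
rewrite exchange_big; apply: eq_bigr => s _; rewrite exchange_big mxE.
apply: eq_bigr => b _; rewrite !mxE mulr_suml; apply: eq_bigr => j _.
by rewrite !mxE mulrAC.
Qed.

Lemma op_norm_le (R : realType) p d (H : 'I_(2 * p) -> 'I_(2 * p) -> 'M[R]_d.+1) c :
  0 <= c -> (forall W, euclid W = 1 -> euclid (block_apply H W) <= c) -> op_norm H <= c.
Proof.
move=> c0 Hc; rewrite /op_norm; set S := (X in sup X).
have [->|/set0P S0] := eqVneq S set0; first by rewrite sup0.
by apply: ge_sup => // r [W [W1 ->]]; exact: Hc.
Qed.

Section Logistic.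
Variable R : realType.

Definition logistic_slope (m : R) := (1 + expR m)^-1.
Definition logistic_curv (m : R) := expR m / (1 + expR m) ^+ 2.

Lemma logistic_slope_ge0 m : 0 <= logistic_slope m.
Proof. by rewrite invr_ge0 addr_ge0 ?expR_ge0. Qed.

Lemma logistic_curv_ge0 m : 0 <= logistic_curv m.
Proof. by rewrite divr_ge0 ?expR_ge0 ?sqr_ge0. Qed.

Lemma logistic_curv_le_slope m : logistic_curv m <= logistic_slope m.
Proof.
have E1 : 0 < 1 + expR m by rewrite addr_gt0 ?expR_gt0.
rewrite /logistic_curv /logistic_slope expr2 invfM mulrA ler_piMl ?invr_ge0 ?ltW //.
by rewrite ltr_pdivrMr // mul1r ltrDr.
Qed.

Lemma logistic_slope_le_loss m : logistic_slope m <= ln (1 + expR (- m)).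
Proof.
set r := logistic_slope m.
have r0 : 0 < r by rewrite invr_gt0 addr_gt0 ?expR_gt0.
have r1 : r < 1 by rewrite invf_lt1 ?addr_gt0 ?expR_gt0 // ltrDl expR_gt0.
have -> : 1 + expR (- m) = (1 - r)^-1.
  rewrite /r /logistic_slope expRN; field.
  by rewrite gt_eqF ?expR_gt0 // addrAC subrr add0r gt_eqF ?expR_gt0.
by rewrite lnV ?posrE ?subr_gt0 // lerNr le_ln1Dx // ltrN2.
Qed.

End Logistic.

Section Activation.
Variable R : realType.

Lemma norm_hrelu'_le1 (h z : R) : 0 < h -> `|hrelu' h z| <= 1.
Proof.
move=> h0; rewrite /hrelu'; case: ltP => z0; first by rewrite normr0 ler01.
case: ifP => zh; last by rewrite normr1.
by rewrite ger0_norm ?divr_ge0 ?(ltW h0) // ler_pdivrMr // mul1r.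
Qed.

Lemma norm_hgamma_le (h z : R) : 0 < h -> `|hgamma h z| <= h^-1.
Proof.
move=> h0; rewrite /hgamma; case: ifP => _; last by rewrite normr0 invr_ge0 ltW.
by rewrite div1r ger0_norm // invr_ge0 ltW.
Qed.

Lemma normr_uw p (i : 'I_(2 * p)) : `|uw R i| = 1.
Proof. by rewrite /uw; case: ifP; rewrite ?normrN normr1. Qed.

Lemma sqr_uw p (i : 'I_(2 * p)) : uw R i ^+ 2 = 1.
Proof. by rewrite -real_normK ?num_real // normr_uw expr1n. Qed.

End Activation.

Section Hessian.
Variables (R : realType) (n p d : nat) (x : 'I_n -> 'rV[R]_d.+1) (y : 'I_n -> R).
Variables (V : 'M[R]_(2 * p, d.+1)) (h : R).

Definition margin s := y s * fV h V (x s).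

Definition act_row s : 'rV[R]_(2 * p) := \row_i (uw R i * hrelu' h (dotv V i (x s))).

Definition hess_diag_row s : 'rV[R]_(2 * p) :=
  \row_i (- uw R i * hgamma h (dotv V i (x s)) * y s * logistic_slope (margin s)).

Definition hess_coef s : 'M[R]_(2 * p) :=
  logistic_curv (margin s) *: ((act_row s)^T *m act_row s) + diag_mx (hess_diag_row s).

Lemma lossL_ge0 : 0 <= lossL h x y V.
Proof.
rewrite mulr_ge0 ?invr_ge0 ?ler0n // sumr_ge0 // => s _.
by rewrite ln_ge0 // lerDl expR_ge0.
Qed.

Lemma hess_blockE :
  hess_block h x y V = fun i j => \sum_s (n%:R^-1 *: hess_coef s) i j *: ((x s)^T *m x s).
Proof.
apply/funext => i; apply/funext => j; rewrite /hess_block /=.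
have [<-|ij] := eqVneq i j; rewrite /= scaler_sumr; apply: eq_bigr => s _.
  rewrite scalerA !mxE big_ord1 !mxE eqxx /= mulr1n; congr (_ *: _); congr (_ * _).
  have u2 := sqr_uw R i; rewrite /logistic_curv /logistic_slope /margin.
  set u := uw R i in u2 *; set a := hrelu' _ _.
  have -> : u * a * (u * a) = a ^+ 2 * u ^+ 2 by ring.
  by rewrite u2; ring.
rewrite scalerA !mxE big_ord1 !mxE (negbTE ij) mulr0n addr0; congr (_ *: _).
by rewrite /logistic_curv /margin; ring.
Qed.

Lemma block_apply_hess W :
  block_apply (hess_block h x y V) W =
  n%:R^-1 *: \sum_s hess_coef s *m (W *m ((x s)^T *m x s)).
Proof.
rewrite hess_blockE block_apply_kron scaler_sumr; apply: eq_bigr => s _.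
by rewrite trmx_mul trmxK -!scalemxAl mulmxA.
Qed.

Hypothesis h_gt0 : 0 < h.
Hypothesis y_le1 : forall s, `|y s| <= 1.

Lemma ler_euclid_hess_coef_mulmx s (Y : 'M[R]_(2 * p, d.+1)) :
  euclid (hess_coef s *m Y) <=
  ((2 * p)%:R * logistic_curv (margin s) + h^-1 * logistic_slope (margin s)) * euclid Y.
Proof.
have act1 : euclid (act_row s) ^+ 2 <= (2 * p)%:R.
  rewrite sqr_euclid big_ord1; apply: le_trans (_ : _ <= \sum_(i < 2 * p) 1) _.
    apply: ler_sum => i _; rewrite /act_row mxE exprMn sqr_uw mul1r -real_normK ?num_real //.
    by rewrite expr_le1 ?norm_hrelu'_le1.
  by rewrite sumr_const card_ord.
have curv1 i : `|hess_diag_row s 0 i| <= h^-1 * logistic_slope (margin s).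
  rewrite mxE !normrM normrN normr_uw mul1r (ger0_norm (logistic_slope_ge0 _)).
  rewrite ler_wpM2r ?logistic_slope_ge0 //.
  by rewrite -[X in _ <= X]mulr1 ler_pM ?norm_hgamma_le.
rewrite mulmxDl mulrDl; apply: le_trans (ler_euclidD _ _) _; apply: lerD.
  rewrite -scalemxAl euclidZ ger0_norm ?logistic_curv_ge0 //.
  rewrite [X in _ <= X]mulrAC [X in _ <= X]mulrC ler_wpM2l ?logistic_curv_ge0 //.
  rewrite -mulmxA; apply: le_trans (ler_euclid_mulmx _ _) _; rewrite euclid_trmx.
  apply: le_trans (ler_wpM2l (euclid_ge0 _) (ler_euclid_mulmx _ _)) _.
  by rewrite mulrA -expr2 ler_wpM2r ?euclid_ge0.
by rewrite ler_euclid_diag_mulmx ?mulr_ge0 ?invr_ge0 ?ltW ?logistic_slope_ge0.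
Qed.

Lemma op_norm_hess_le : (forall s, euclid (x s) = 1) ->
  op_norm (hess_block h x y V) <= ((2 * p)%:R + h^-1) * lossL h x y V.
Proof.
move=> x1; have hinv0 : 0 <= h^-1 by rewrite invr_ge0 ltW.
have c0 : 0 <= (2 * p)%:R + h^-1 by rewrite addr_ge0 ?ler0n.
apply: op_norm_le => [|W W1]; first exact: mulr_ge0 c0 lossL_ge0.
rewrite block_apply_hess euclidZ ger0_norm // /lossL mulrCA ler_wpM2l // mulr_sumr.
apply: le_trans (ler_euclid_sum _ _) _; apply: ler_sum => s _.
have Y1 : euclid (W *m ((x s)^T *m x s)) <= 1.
  apply: le_trans (ler_euclid_mulmx _ _) _; rewrite W1 mul1r.
  by apply: le_trans (ler_euclid_mulmx _ _) _; rewrite euclid_trmx x1 mulr1.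
apply: le_trans (ler_euclid_hess_coef_mulmx _ _) _.
have slope_le := logistic_slope_le_loss (margin s).
have curv_le := le_trans (logistic_curv_le_slope (margin s)) slope_le.
apply: le_trans (ler_wpM2l _ Y1) _.
  by apply: addr_ge0; apply: mulr_ge0; rewrite ?ler0n ?logistic_curv_ge0 ?logistic_slope_ge0.
by rewrite mulr1 mulrDl lerD // ler_wpM2l ?ler0n.
Qed.

End Hessian.

Theorem lemma2 (R : realType) (n p d : nat) (x : 'I_n -> 'rV[R]_(d.+1))
  (y : 'I_n -> R) (V : 'M[R]_(2 * p, d.+1)) :
  (0 < p)%N ->
  (forall s, \sum_(a < d.+1) x s 0 a ^+ 2 = 1) ->
  (forall s, y s = 1 \/ y s = -1) ->
  op_norm (hess_block (p%:R^-1) x y V)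
    <= 5 * p%:R * lossL (p%:R^-1) x y V.
Proof.
move=> p_gt0 x1 y1.
have h_gt0 : 0 < p%:R^-1 :> R by rewrite invr_gt0 ltr0n.
have y_le1 s : `|y s| <= 1 by case: (y1 s) => ->; rewrite ?normrN normr1.
have x_unit s : euclid (x s) = 1 by rewrite /euclid big_ord1 x1 sqrtr1.
apply: le_trans (op_norm_hess_le V h_gt0 y_le1 x_unit) _.
rewrite invrK ler_wpM2r ?lossL_ge0 //.
by rewrite natrM; have := ler0n R p; lra.
Qed.
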